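(* Assume $\xi_v\ge0$ for all $v$, $\pi_v>0$ for all $v\in\mathcal V$, and that the numbers $\{M_i\xi_i\}_{i\in\mathcal V}$ are not all equal. Then for all $\alpha,c\in\mathbb R$, the point $$\boldsymbol\alpha^\star=\alpha\mathbf 1,\qquad \boldsymbol\beta^\star=c\,\mathbf 1-e^{-\alpha}\,\boldsymbol M\circ\boldsymbol\xi$$ is a stationary point of the gradient flow $(\dot{\boldsymbol\alpha},\dot{\boldsymbol\beta})=-\nabla_{\boldsymbol\alpha,\boldsymbol\beta}\mathrm{loss}(\boldsymbol\alpha,\boldsymbol\beta)$, and every such point is a global minimizer of $\mathrm{loss}$.
   Context: Let $\mathcal V=\{1,\dots,V\}$ with trigger set $\mathcal T\subseteq\mathcal V$; $\mathbf P=(p_{vk})$ row-stochastic; weights $\pi_v$ and $\tilde\pi_v=\pi_v\mathbf 1\{v\notin\mathcal T\}$. Fix nonnegative integers $M_k$ with $M=\sum_kM_k>0$, reals $\xi_k\ge0$, and write $\boldsymbol M=(M_1,\dots,M_V)$, $\boldsymbol\xi=(\xi_1,\dots,\xi_V)$, $\circ$ for the entrywise product, $\mathbf 1$ for the all-ones vector. For $\boldsymbol\alpha,\boldsymbol\beta\in\mathbb R^V$, $$l_{vi}=\frac{p_{vi}\exp\!\big(\frac{M_i\xi_i+e^{\alpha_v}\beta_i}{e^{\alpha_v}+M}\big)}{\sum_{k} p_{vk}\exp\!\big(\frac{M_k\xi_k+e^{\alpha_v}\beta_k}{e^{\alpha_v}+M}\big)},$$ $\mathrm{loss}_v(\alpha_v,\boldsymbol\beta)=\sum_k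 p_{vk}\log(p_{vk}/l_{vk})$ (with $0\log 0=0$), $\mathrm{loss}(\boldsymbol\alpha,\boldsymbol\beta)=\sum_{v}\tilde\pi_v\mathrm{loss}_v(\alpha_v,\boldsymbol\beta)$. *)

From mathcomp Require Import all_boot all_order all_algebra.
From mathcomp Require Import all_classical all_reals all_analysis.
Set Implicit Arguments. Unset Strict Implicit. Unset Printing Implicit Defensive.
Import Order.TTheory GRing.Theory Num.Theory.
Local Open Scope ring_scope.

Section Defs.
Variables (R : realType) (V : nat).
Variables (T : {set 'I_V}) (P : 'I_V -> 'I_V -> R) (pi xi : 'I_V -> R)
  (M : 'I_V -> nat).

Definition Mtot : R := (\sum_k M k)%:R.

Definition expo (i : 'I_V) (av : R) (b : 'I_V -> R) : R :=
  ((M i)%:R * xi i + expR av * b i) / (expR av + Mtot).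

Definition lvi (v i : 'I_V) (av : R) (b : 'I_V -> R) : R :=
  P v i * expR (expo i av b) / \sum_k P v k * expR (expo k av b).

Definition lossv (v : 'I_V) (av : R) (b : 'I_V -> R) : R :=
  \sum_k (if P v k == 0 then 0 else P v k * ln (P v k / lvi v k av b)).

Definition pitilde (v : 'I_V) : R := if v \in T then 0 else pi v.

Definition loss (a b : 'I_V -> R) : R := \sum_v pitilde v * lossv v (a v) b.
End Defs.

Definition upd (R : Type) (V : nat) (f : 'I_V -> R) (v : 'I_V) (t : R) : 'I_V -> R :=
  fun w => if w == v then t else f w.

From mathcomp Require Import all_boot all_order all_algebra.
From mathcomp Require Import all_classical all_reals all_analysis.
From mathcomp Require Import lra.
Set Implicit Arguments. Unset Strict Implicit. Unset Printing Implicit Defensive.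
Import Order.TTheory GRing.Theory Num.Theory.
Local Open Scope ring_scope.

(* At the proposed point every exponent M_k xi_k + e^alpha beta_k equals the
   same number e^alpha c, so each softmax l_v reproduces the row p_v and every
   loss_v vanishes.  By Gibbs' inequality each loss_v is a Kullback-Leibler
   divergence, hence nonnegative, so this point is a global minimizer of the
   (smooth) loss, and its partial derivatives vanish there by Fermat's rule. *)

Section DerivableR.
Variable R : realType.

Definition derivableR (f : R -> R) := forall t, derivable f t 1.

Lemma derivableR_cst (c : R) : derivableR (fun=> c).
Proof. by move=> t; exact: derivable_cst. Qed.

Lemma derivableR_id : derivableR id.
Proof. by move=> t; exact: derivable_id. Qed.

Lemma derivableR_add (f g : R -> R) :
  derivableR f -> derivableR g -> derivableR (fun t => f t + g t).
Proof. by move=> df dg t; exact: derivableD. Qed.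

Lemma derivableR_mul (f g : R -> R) :
  derivableR f -> derivableR g -> derivableR (fun t => f t * g t).
Proof. by move=> df dg t; exact: derivableM. Qed.

Lemma derivableR_inv (f : R -> R) :
  derivableR f -> (forall t, f t != 0) -> derivableR (fun t => (f t)^-1).
Proof. by move=> df f_neq0 t; exact: derivableV. Qed.

Lemma derivableR_sum (I : nat) (F : 'I_I -> R -> R) :
  (forall i, derivableR (F i)) -> derivableR (fun t => \sum_i F i t).
Proof.
move=> dF t; have -> : (fun t => \sum_i F i t) = \sum_i F i.
  by apply/funext => s; rewrite fct_sumE.
by apply: derivable_sum => i; exact: dF.
Qed.

Lemma derivableR_comp (f g : R -> R) :
  derivableR f -> (forall t, derivable g (f t) 1) -> derivableR (fun t => g (f t)).
Proof.
move=> df dg t; apply/derivable1_diffP.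
by apply: differentiable_comp; apply/derivable1_diffP.
Qed.

Lemma derivableR_expR (f : R -> R) :
  derivableR f -> derivableR (fun t => expR (f t)).
Proof. by move=> df; apply: derivableR_comp => // t; exact: derivable_expR. Qed.

Lemma derivableR_ln (f : R -> R) :
  derivableR f -> (forall t, 0 < f t) -> derivableR (fun t => ln (f t)).
Proof.
move=> df f_gt0; apply: derivableR_comp => // t.
exact/ex_derive/is_derive1_ln.
Qed.

Lemma is_derive0_global_min (f : R -> R) (x : R) :
  derivableR f -> (forall t, f x <= f t) -> is_derive x 1 f 0.
Proof.
move=> df fx_min; apply: (@derive1_at_min _ _ (x - 1) (x + 1)).
- lra.
- by move=> t _; exact: df.
- rewrite in_itv /=; apply/andP; split; lra.
- by move=> t _; exact: fx_min.
Qed.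

End DerivableR.

Section Gibbs.
Variable R : realType.

Lemma sub_le_mul_ln_div (p q : R) : 0 < p -> 0 < q -> p - q <= p * ln (p / q).
Proof.
move=> p_gt0 q_gt0.
have qp_gt0 : 0 < q / p by rewrite divr_gt0.
have ln_qp : ln (q / p) <= q / p - 1.
  by have := @le_ln1Dx R (q / p - 1); rewrite addrCA subrr addr0; apply; lra.
rewrite -invf_div lnV ?posrE // mulrN.
have -> : p - q = - (p * (q / p - 1)).
  by rewrite mulrBr mulr1 mulrCA divff ?gt_eqF // mulr1 opprB.
by rewrite lerN2; apply: ler_wpM2l; [exact: ltW|].
Qed.

Lemma gibbs_ineq (I : finType) (p q : I -> R) :
  (forall k, 0 <= q k) -> (forall k, p k != 0 -> 0 < p k /\ 0 < q k) ->
  \sum_k p k = \sum_k q k ->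
  0 <= \sum_k (if p k == 0 then 0 else p k * ln (p k / q k)).
Proof.
move=> q_ge0 pq_gt0 sum_pq.
apply: (@le_trans _ _ (\sum_k (p k - q k))).
  by rewrite sumrB sum_pq subrr.
apply: ler_sum => k _.
case: eqP => [->|/eqP pk_neq0]; first by rewrite sub0r oppr_le0.
by have [pk_gt0 qk_gt0] := pq_gt0 k pk_neq0; exact: sub_le_mul_ln_div.
Qed.

End Gibbs.

Section Loss.
Variables (R : realType) (V : nat) (T : {set 'I_V}) (P : 'I_V -> 'I_V -> R).
Variables (pi xi : 'I_V -> R) (M : 'I_V -> nat).
Hypothesis P_ge0 : forall v k, 0 <= P v k.
Hypothesis P_sum1 : forall v, \sum_k P v k = 1.

Lemma lvi_denom_gt0 v av b : 0 < \sum_k P v k * expR (expo xi M k av b).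
Proof.
rewrite lt_def sumr_ge0 ?andbT; last by move=> k _; rewrite mulr_ge0 ?expR_ge0.
apply: contra_neq (oner_neq0 R) => /psumr_eq0P Z0.
rewrite -(P_sum1 v); apply: big1 => k _; apply/eqP.
have /(_ k isT)/eqP := Z0 (fun j _ => mulr_ge0 (P_ge0 v j) (expR_ge0 _)).
by rewrite mulf_eq0 (gt_eqF (expR_gt0 _)) orbF.
Qed.

Lemma lvi_ge0 v k av b : 0 <= lvi P xi M v k av b.
Proof. by rewrite /lvi divr_ge0 ?mulr_ge0 ?P_ge0 ?expR_ge0 ?ltW ?lvi_denom_gt0. Qed.

Lemma lvi_gt0 v k av b : P v k != 0 -> 0 < lvi P xi M v k av b.
Proof.
move=> Pvk_neq0; have Pvk_gt0 : 0 < P v k by rewrite lt_def Pvk_neq0 P_ge0.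
by rewrite /lvi divr_gt0 ?mulr_gt0 ?expR_gt0 ?lvi_denom_gt0.
Qed.

Lemma sum_lvi v av b : \sum_k lvi P xi M v k av b = 1.
Proof. by rewrite /lvi -mulr_suml divff ?gt_eqF ?lvi_denom_gt0. Qed.

Lemma lossv_ge0 v av b : 0 <= lossv P xi M v av b.
Proof.
apply: gibbs_ineq => [k|k Pvk_neq0|]; first exact: lvi_ge0.
  by rewrite lvi_gt0 // lt_def Pvk_neq0 P_ge0.
by rewrite P_sum1 sum_lvi.
Qed.

Lemma loss_ge0 a b : (forall v, 0 <= pi v) -> 0 <= loss T P pi xi M a b.
Proof.
move=> pi_ge0; apply: sumr_ge0 => v _; rewrite mulr_ge0 ?lossv_ge0 //.
by rewrite /pitilde; case: ifP.
Qed.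

(* A softmax with constant exponents returns its prior row. *)
Lemma lossv_expo_const v av b e :
  (forall k, expo xi M k av b = e) -> lossv P xi M v av b = 0.
Proof.
move=> expo_e; apply: big1 => k _; case: eqP => // /eqP Pvk_neq0.
rewrite /lvi expo_e; under eq_bigr => j _ do rewrite expo_e.
rewrite -mulr_suml P_sum1 mul1r mulfK ?gt_eqF ?expR_gt0 //.
by rewrite divff // ln1 mulr0.
Qed.

Lemma expo_star alpha c k :
  expo xi M k alpha (fun j => c - expR (- alpha) * ((M j)%:R * xi j))
  = expR alpha * c / (expR alpha + Mtot R M).
Proof.
by rewrite /expo mulrBr expRN mulVKf ?gt_eqF ?expR_gt0 // addrC subrK.
Qed.

Lemma loss_star alpha c :
  loss T P pi xi M (fun=> alpha)
    (fun k => c - expR (- alpha) * ((M k)%:R * xi k)) = 0.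
Proof.
apply: big1 => v _.
by rewrite (lossv_expo_const v (expo_star alpha c)) mulr0.
Qed.

Lemma derivableR_expo k (A : R -> R) (B : R -> 'I_V -> R) :
  derivableR A -> derivableR (fun t => B t k) ->
  derivableR (fun t => expo xi M k (A t) (B t)).
Proof.
move=> dA dB; apply: derivableR_mul.
  apply: derivableR_add; first exact: derivableR_cst.
  by apply: derivableR_mul => //; exact: derivableR_expR.
apply: derivableR_inv.
  by apply: derivableR_add; [exact: derivableR_expR|exact: derivableR_cst].
by move=> t; rewrite gt_eqF // ltr_pwDl ?expR_gt0 // ler0n.
Qed.

Lemma derivableR_lossv v (A : R -> R) (B : R -> 'I_V -> R) :
  derivableR A -> (forall k, derivableR (fun t => B t k)) ->
  derivableR (fun t => lossv P xi M v (A t) (B t)).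
Proof.
move=> dA dB; have dexpo (k : 'I_V) := derivableR_expR (derivableR_expo dA (dB k)).
apply: derivableR_sum => k; case: eqP => [_|/eqP Pvk_neq0].
  exact: derivableR_cst.
have Pvk_gt0 : 0 < P v k by rewrite lt_def Pvk_neq0 P_ge0.
apply: derivableR_mul; first exact: derivableR_cst.
apply: derivableR_ln => [|t]; last by rewrite divr_gt0 ?lvi_gt0.
apply: derivableR_mul; first exact: derivableR_cst.
apply: derivableR_inv => [|t]; last by rewrite gt_eqF ?lvi_gt0.
apply: derivableR_mul; first by apply: derivableR_mul => //; exact: derivableR_cst.
apply: derivableR_inv => [|t]; last by rewrite gt_eqF ?lvi_denom_gt0.
by apply: derivableR_sum => j; apply: derivableR_mul => //; exact: derivableR_cst.
Qed.

Lemma derivableR_loss (A B : R -> 'I_V -> R) :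
  (forall v, derivableR (fun t => A t v)) -> (forall k, derivableR (fun t => B t k)) ->
  derivableR (fun t => loss T P pi xi M (A t) (B t)).
Proof.
move=> dA dB; apply: derivableR_sum => v.
by apply: derivableR_mul; [exact: derivableR_cst|exact: derivableR_lossv].
Qed.

End Loss.

Lemma upd_id (S : Type) (V : nat) (f : 'I_V -> S) v : upd f v (f v) = f.
Proof. by apply/funext => w; rewrite /upd; case: eqP => // ->. Qed.

Lemma derivableR_upd (R : realType) (V : nat) (f : 'I_V -> R) v w :
  derivableR (fun t => upd f v t w).
Proof. by rewrite /upd; case: eqP => _; [exact: derivableR_id|exact: derivableR_cst]. Qed.

Theorem theorem2 (R : realType) (V : nat) (T : {set 'I_V})
  (P : 'I_V -> 'I_V -> R) (pi xi : 'I_V -> R) (M : 'I_V -> nat) :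
  (forall v k, 0 <= P v k) ->
  (forall v, \sum_k P v k = 1) ->
  (0 < \sum_k M k)%N ->
  (forall k, 0 <= xi k) ->
  (forall v, 0 < pi v) ->
  (exists i j, (M i)%:R * xi i != (M j)%:R * xi j) ->
  forall alpha c : R,
  let astar : 'I_V -> R := fun _ => alpha in
  let bstar : 'I_V -> R := fun k => c - expR (- alpha) * ((M k)%:R * xi k) in
  let L := loss T P pi xi M in
  [/\ (forall v : 'I_V,
         is_derive (astar v) 1 (fun t : R => L (upd astar v t) bstar) 0),
      (forall k : 'I_V,
         is_derive (bstar k) 1 (fun t : R => L astar (upd bstar k t)) 0)
    & (forall a b : 'I_V -> R, L astar bstar <= L a b)].
Proof.
move=> P_ge0 P_sum1 _ _ pi_gt0 _ alpha c astar bstar L.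
have star_min a b : L astar bstar <= L a b.
  by rewrite /L loss_star // loss_ge0 // => v; exact: ltW.
split=> // [v|k]; apply: is_derive0_global_min => [|t]; rewrite ?upd_id //.
- apply: derivableR_loss => // [w|k]; [exact: derivableR_upd|exact: derivableR_cst].
- apply: derivableR_loss => // [w|j]; [exact: derivableR_cst|exact: derivableR_upd].
Qed.
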